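(* Let $k,n$ be integers with $k\geq 5$ and $n\geq 4$, and let $c$ be an exact $k$-coloring of $\mathcal{B}_n$ with $c(\emptyset)\neq c([n])$. Then $\mathcal{B}_n$ contains no rainbow induced copy of $\mathcal{B}_2$ if and only if $k=5$ and $c$ is of Type 1.
   Context: $\mathcal{B}_n$ is the Boolean lattice of subsets of $[n]$ under inclusion. For $X\subseteq Y$: $\mathcal{B}_{[X,Y]}=\{Z:X\subseteq Z\subseteq Y\}$, and $\mathcal{B}_{(X,Y)}$, $\mathcal{B}_{(X,Y]}$, $\mathcal{B}_{[X,Y)}$ are defined analogously with strict inclusions at the open ends. An exact $k$-coloring is a surjective map $c:\mathcal{B}_n\to[k]$. A rainbow induced copy of $\mathcal{B}_2$ is four sets $W_1,W_2,W_3,W_4$ with $W_1\subsetneq W_2\subsetneq W_4$, $W_1\subsetneq W_3\subsetneq W_4$, $W_2,W_3$ incomparable, and $c(W_1),\dots,c(W_4)$ pairwise distinct. ''Families $\mathcal{F}_1,\dots,\mathcal{F}_r$ are monochromatically colored with distinct colors'' means each $\mathcal{F}_i$ is monochromatic and no two sets from different families share a color. The coloring $c$ is of Type 1 if there exist $X_0,Y_0$ with $\emptyset\subsetneq X_0\subsetneq Y_0\subsetneq[n]$ and $|Y_0|\geq|X_0|+2$ such that the families $\mathcal{B}_{[\emptyset,Y_0]}\setminus\mathcal{B}_{[X_0,Y_0]}$, $\{X_0\}$, $\mathcal{B}_{(X_0,Y_0)}$, $\{Y_0\}$, $\mathcal{B}_{[X_0,[n]]}\setminus\mathcal{B}_{[X_0,Y_0]}$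 are monochromatically colored with distinct colors, and each set in $\mathcal{B}_n\setminus(\mathcal{B}_{[\emptyset,Y_0]}\cup\mathcal{B}_{[X_0,[n]]})$ has the same color as the sets of the first or of the last of these families. *)

From mathcomp Require Import all_boot.
Set Implicit Arguments. Unset Strict Implicit. Unset Printing Implicit Defensive.

(* Subsets of [n] are modelled as {set 'I_n}; colors [k] as 'I_k. *)

Definition exact_coloring (n k : nat) (c : {set 'I_n} -> 'I_k) : Prop :=
  forall i : 'I_k, exists Z : {set 'I_n}, c Z = i.

Definition rainbow_B2 (n k : nat) (c : {set 'I_n} -> 'I_k) : Prop :=
  exists W1 W2 W3 W4 : {set 'I_n},
    [/\ W1 \proper W2, W2 \proper W4, W1 \proper W3, W3 \proper W4 &
        (~~ (W2 \subset W3) /\ ~~ (W3 \subset W2))] /\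
    uniq [:: c W1; c W2; c W3; c W4].

Definition type1 (n k : nat) (c : {set 'I_n} -> 'I_k) : Prop :=
  exists X0 Y0 : {set 'I_n},
    [/\ set0 \proper X0, X0 \proper Y0, Y0 \proper [set: 'I_n] &
        #|X0| + 2 <= #|Y0| ] /\
    exists a b d e f : 'I_k,
      uniq [:: a; b; d; e; f] /\
      (forall Z : {set 'I_n}, Z \subset Y0 -> ~~ (X0 \subset Z) -> c Z = a) /\
      [/\ c X0 = b,
          (forall Z : {set 'I_n}, X0 \proper Z -> Z \proper Y0 -> c Z = d),
          c Y0 = e,
          (forall Z : {set 'I_n}, X0 \subset Z -> ~~ (Z \subset Y0) -> c Z = f) &
          (forall Z : {set 'I_n}, ~~ (Z \subset Y0) -> ~~ (X0 \subset Z) -> c Z = a \/ c Z = f)].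

(** A set is special if its color is neither [c set0] nor [c setT].  Two
   special sets of different colors are comparable, since otherwise together
   with the empty and the full set they would form a rainbow B_2.  As k >= 5
   there are three special colors, hence a chain A < B < C of special sets
   with three distinct colors.  Two comparable sets strictly between A and C
   have a common incomparable set there, so forbidding rainbow copies spreads
   the color of B over the whole open interval (A, C); comparing with the sets of
   this interval then shows that A, C and (A, C) carry all special sets, so
   k = 5.  A set below C not containing A must have color [c set0], and a set
   above A not below C color [c setT], since otherwise a rainbow B_2 appears:
   the coloring is of Type 1 with X0 = A and Y0 = C.  Conversely, in a Type 1
   coloring the middle sets of a rainbow B_2 can have neither color a (worn
   only by sets not containing X0) nor f (worn only by sets not inside Y0), so
   both lie in [X0, Y0]; being incomparable they avoid its ends, and both get
   color d. *)

From mathcomp Require Import all_boot zify.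
Set Implicit Arguments. Unset Strict Implicit. Unset Printing Implicit Defensive.

Ltac colors_distinct :=
  intros;
  repeat match goal with
  | H : is_true (uniq (_ :: _)) |- _ => rewrite /= in H
  | H : is_true (_ \notin _ :: _) |- _ => rewrite !inE ?negb_or in H
  | H : is_true (_ && _) |- _ => case/andP: H => ? ?
  end;
  rewrite /= ?inE ?negb_or; do ?[apply/andP; split]; by [| rewrite eq_sym].

Section Intervals.
Variable T : finType.
Implicit Types A B C S W X Y Z : {set T}.

Definition incomparable X Y := ~~ (X \subset Y) && ~~ (Y \subset X).

Lemma incomparable_sym X Y : incomparable X Y = incomparable Y X.
Proof. by rewrite /incomparable andbC. Qed.

Lemma exists_notin (s : seq T) : size s < #|T| -> exists x, x \notin s.
Proof.
move=> lt_s; apply/existsP; apply: contraLR lt_s => /existsPn all_s.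
rewrite -leqNgt; apply: leq_trans (card_size s); apply: subset_leq_card.
by apply/subsetP => x _; move/negPn: (all_s x).
Qed.

Lemma exists_other X z : 1 < #|X| -> exists2 x, x \in X & x != z.
Proof.
rewrite (cardsD1 z) => lt1; have : 0 < #|X :\ z| by move: lt1; case: (z \in X) => /=; lia.
by case/card_gt0P => x; rewrite in_setD1 => /andP[xz xX]; exists x.
Qed.

Lemma proper_chain_card A B C : A \proper B -> B \proper C -> #|A| + 2 <= #|C|.
Proof. by move=> /proper_card AB /proper_card BC; lia. Qed.

Lemma interval_incomparable_pair A Z1 Z2 C :
  A \proper Z1 -> Z1 \subset Z2 -> Z2 \proper C ->
  exists W, [/\ A \proper W, W \proper C, incomparable W Z1 & incomparable W Z2].
Proof.
move=> AZ1 Z12 Z2C.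
have /properP[_ [x xC xZ2]] := Z2C; have /properP[_ [z zZ1 zA]] := AZ1.
have xZ1 : x \notin Z1 by apply: contra xZ2; apply: (subsetP Z12).
have xA : x \notin A by apply: contra xZ1; apply: (subsetP (proper_sub AZ1)).
have zC : z \in C by apply: (subsetP (proper_sub Z2C)); apply: (subsetP Z12).
have zW : z \notin x |: A.
  by rewrite in_setU1 negb_or zA andbT; apply: contraNneq xZ1 => <-.
have AC : A \subset C.
  by apply: proper_sub; apply: proper_sub_trans AZ1 (subset_trans Z12 (proper_sub Z2C)).
exists (x |: A); split.
- by apply: properUr; rewrite sub1set.
- apply/properP; split; last by exists z.
  by apply/subsetP => y; rewrite in_setU1 => /predU1P[->|/(subsetP AC)].
- apply/andP; split; apply/subsetPn; [by exists x; rewrite ?setU11 | by exists z].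
- apply/andP; split; apply/subsetPn; first by exists x; rewrite ?setU11.
  by exists z; rewrite ?(subsetP Z12).
Qed.

Lemma interval_incomparable A C S :
  A \subset C -> 1 < #|C :\: A| ->
  ~~ (S \subset A) -> ~~ (C \subset S) -> ~~ ((A \subset S) && (S \subset C)) ->
  exists W, [/\ A \proper W, W \proper C & incomparable W S].
Proof.
move=> AC CA2 SA CS; case: (boolP (A \subset S)) => /= [AS SC | AS _].
- have [u uC uS] := subsetPn CS.
  have uA : u \notin A by apply: contra uS; apply: (subsetP AS).
  have [v] := exists_other u CA2; rewrite inE => /andP[vA vC] vu.
  exists (C :\ v); split.
  + apply/properP; split; last by exists u; rewrite // in_setD1 eq_sym vu.
    by apply/subsetP => y yA; rewrite in_setD1 (subsetP AC) // andbT; apply: contraNneq vA => <-.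
  + exact: properD1.
  + apply/andP; split; apply/subsetPn; first by exists u; rewrite // in_setD1 eq_sym vu.
    by have [y yS yC] := subsetPn SC; exists y => //; apply: contra yC => /setD1P[].
- have [s sS sA] := subsetPn SA.
  have [v] := exists_other s CA2; rewrite inE => /andP[vA vC] vs.
  have [w] := exists_other v CA2; rewrite inE => /andP[wA wC] wv.
  have vAs : s \notin v |: A by rewrite in_setU1 negb_or eq_sym vs.
  exists (v |: A); split.
  + by apply: properUr; rewrite sub1set.
  + apply/properP; split; last by exists w; rewrite // in_setU1 negb_or wv.
    by apply/subsetP => y; rewrite in_setU1 => /predU1P[->|/(subsetP AC)].
  + apply/andP; split; apply/subsetPn; last by exists s.
    by have [y yA yS] := subsetPn AS; exists y; rewrite // in_setU1 yA orbT.
Qed.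

End Intervals.

Section Type1.
Variables (n k : nat) (c : {set 'I_n} -> 'I_k) (X0 Y0 : {set 'I_n}) (a b d e f : 'I_k).
Implicit Types Z : {set 'I_n}.
Hypotheses (XY : X0 \subset Y0) (cols : uniq [:: a; b; d; e; f]).
Hypotheses (c_low : forall Z, Z \subset Y0 -> ~~ (X0 \subset Z) -> c Z = a) (c_X0 : c X0 = b)
  (c_mid : forall Z, X0 \proper Z -> Z \proper Y0 -> c Z = d) (c_Y0 : c Y0 = e)
  (c_up : forall Z, X0 \subset Z -> ~~ (Z \subset Y0) -> c Z = f)
  (c_out : forall Z, ~~ (Z \subset Y0) -> ~~ (X0 \subset Z) -> c Z = a \/ c Z = f).

Lemma type1_regions Z :
  [\/ ~~ (X0 \subset Z) /\ c Z = a, ~~ (Z \subset Y0) /\ c Z = f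
    | (X0 \subset Z) && (Z \subset Y0) /\ [\/ Z = X0 /\ c Z = b, Z = Y0 /\ c Z = e | c Z = d]].
Proof.
case: (boolP (X0 \subset Z)) => XZ; case: (boolP (Z \subset Y0)) => ZY.
- constructor 3; split=> //.
  case: (eqVneq Z X0) => [->|ZX]; first by constructor 1.
  case: (eqVneq Z Y0) => [->|ZY']; first by constructor 2.
  by constructor 3; rewrite c_mid // properEneq ?XZ ?ZY ?ZY' // eq_sym ZX.
- by constructor 2; rewrite c_up.
- by constructor 1; rewrite c_low.
- by case: (c_out ZY XZ); [constructor 1 | constructor 2].
Qed.

Lemma type1_a_low Z : c Z = a -> ~~ (X0 \subset Z).
Proof.
move=> Za; case: (type1_regions Z) => [[//]|[_ E]|[_ [[_ E]|[_ E]|E]]]; exfalso;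
by move/eqP: E; rewrite Za; apply/negP; move: (cols); colors_distinct.
Qed.

Lemma type1_f_high Z : c Z = f -> ~~ (Z \subset Y0).
Proof.
move=> Zf; case: (type1_regions Z) => [[_ E]|[//]|[_ [[_ E]|[_ E]|E]]]; exfalso;
by move/eqP: E; rewrite Zf; apply/negP; move: (cols); colors_distinct.
Qed.

Lemma type1_inside Z :
  c Z != a -> c Z != f -> (X0 \subset Z) && (Z \subset Y0) /\ [\/ Z = X0, Z = Y0 | c Z = d].
Proof.
move=> Za Zf; case: (type1_regions Z) => [[_ E]|[_ E]|[inZ [[-> _]|[-> _]|E]]].
- by rewrite E eqxx in Za.
- by rewrite E eqxx in Zf.
- by split; [rewrite subxx XY | constructor 1].
- by split; [rewrite subxx XY | constructor 2].
- by split=> //; constructor 3.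
Qed.

Lemma type1_outside Z : ~~ ((X0 \subset Z) && (Z \subset Y0)) -> c Z = a \/ c Z = f.
Proof.
move=> out; case: (eqVneq (c Z) a) => [|Za]; first by left.
case: (eqVneq (c Z) f) => [|Zf]; first by right.
by have [inZ _] := type1_inside Za Zf; rewrite inZ in out.
Qed.

Lemma type1_rainbow_side (W1 U V W4 : {set 'I_n}) :
  W1 \subset U -> U \subset W4 -> W1 \subset V -> V \subset W4 ->
  uniq [:: c W1; c U; c V; c W4] -> c U != a /\ c U != f.
Proof.
move=> W1U UW4 W1V VW4 cUV.
have [dW1U dW1V dUV dUW4 dVW4] :
  [/\ c W1 != c U, c W1 != c V, c U != c V, c U != c W4 & c V != c W4].
  by split; colors_distinct.
split; apply/eqP => cU.
- have [cW1|cW1] : c W1 = a \/ c W1 = f.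
    by apply: type1_outside; apply: contra (type1_a_low cU) => /andP[XW1 _];
      exact: subset_trans XW1 W1U.
    by move: dW1U; rewrite cW1 cU eqxx.
  have [cV|cV] : c V = a \/ c V = f.
    by apply: type1_outside; apply: contra (type1_f_high cW1) => /andP[_ VY];
      exact: subset_trans W1V VY.
    by move: dUV; rewrite cV cU eqxx.
  by move: dW1V; rewrite cV cW1 eqxx.
- have [cW4|cW4] : c W4 = a \/ c W4 = f.
    by apply: type1_outside; apply: contra (type1_f_high cU) => /andP[_ W4Y];
      exact: subset_trans UW4 W4Y.
  have [cV|cV] : c V = a \/ c V = f.
    by apply: type1_outside; apply: contra (type1_a_low cW4) => /andP[XV _];
      exact: subset_trans XV VW4.
    by move: dVW4; rewrite cV cW4 eqxx.
  by move: dUV; rewrite cV cU eqxx.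
by move: dUW4; rewrite cW4 cU eqxx.
Qed.

Lemma type1_colors_no_rainbow : ~ rainbow_B2 c.
Proof.
move=> [W1 [W2 [W3 [W4 [[/proper_sub W12 /proper_sub W24 /proper_sub W13 /proper_sub W34
  [W23 W32]] cW]]]]].
have [W2a W2f] := type1_rainbow_side W12 W24 W13 W34 cW.
have [W3a W3f] := type1_rainbow_side W13 W34 W12 W24 ltac:(colors_distinct).
have [/andP[XW2 W2Y] ends2] := type1_inside W2a W2f.
have [/andP[XW3 W3Y] ends3] := type1_inside W3a W3f.
case: ends2 => [E2|E2|cW2]; first by rewrite E2 XW3 in W23.
  by rewrite E2 W3Y in W32.
case: ends3 => [E3|E3|cW3]; first by rewrite E3 XW2 in W32.
  by rewrite E3 W2Y in W23.
have : c W2 != c W3 by colors_distinct.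
by rewrite cW2 cW3 eqxx.
Qed.

End Type1.

Lemma type1_no_rainbow n k (c : {set 'I_n} -> 'I_k) : type1 c -> ~ rainbow_B2 c.
Proof.
case=> X0 [Y0 [[_ /proper_sub XY _ _] [a [b [d [e [f [cols [c_low [c_X0 c_mid c_Y0 c_up c_out]]]]]]]]]].
exact: type1_colors_no_rainbow XY cols c_low c_X0 c_mid c_Y0 c_up c_out.
Qed.

Lemma exact_coloring_size n k (c : {set 'I_n} -> 'I_k) (s : seq 'I_k) :
  exact_coloring c -> (forall Z, c Z \in s) -> k <= size s.
Proof.
move=> onto cs; rewrite -[X in X <= _]card_ord; apply: leq_trans (card_size s).
by apply: subset_leq_card; apply/subsetP => i _; have [Z <-] := onto i.
Qed.

Section NoRainbow.
Variables (n k : nat) (c : {set 'I_n} -> 'I_k).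
Hypothesis no_rainbow : ~ rainbow_B2 c.
Implicit Types A B C D S W X Y Z : {set 'I_n}.

Lemma B2_colors_not_uniq W1 W2 W3 W4 :
  W1 \proper W2 -> W2 \proper W4 -> W1 \proper W3 -> W3 \proper W4 ->
  incomparable W2 W3 -> ~ uniq [:: c W1; c W2; c W3; c W4].
Proof.
move=> W12 W24 W13 W34 /andP[W23 W32] cols.
by apply: no_rainbow; exists W1, W2, W3, W4.
Qed.

Lemma colored_proper X Y : X \subset Y -> c X != c Y -> X \proper Y.
Proof. by move=> XY cXY; rewrite properEneq XY andbT; apply: contraNneq cXY => ->. Qed.

Lemma incomparable_colors_not_uniq X Y :
  incomparable X Y -> ~ uniq [:: c set0; c X; c Y; c setT].
Proof.
move=> XY cols.
have proper0 U : c set0 != c U -> set0 \proper U by apply: colored_proper; apply: sub0set.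
have properT U : c U != c setT -> U \proper setT by apply: colored_proper; apply: subsetT.
by apply: (B2_colors_not_uniq _ _ _ _ XY cols); [apply: proper0 | apply: properT
  | apply: proper0 | apply: properT]; colors_distinct.
Qed.

Definition tricolored A B C :=
  [/\ A \proper B, B \proper C & uniq [:: c set0; c setT; c A; c B; c C]].

Lemma interval_color A B C :
  tricolored A B C -> forall Z, A \proper Z -> Z \proper C -> c Z = c B.
Proof.
move=> [AB BC cols].
have spread D Z : A \proper D -> D \proper C -> A \proper Z -> Z \proper C ->
    incomparable D Z -> c D = c B -> c Z = c B.
  move=> AD DC AZ ZC DZ cD; case: (eqVneq (c Z) (c B)) => // ZB; exfalso.
  have special_Z : c Z = c A \/ c Z = c C -> False.
    by move=> cZ; apply: (incomparable_colors_not_uniq DZ); rewrite cD;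
      case: cZ => ->; colors_distinct.
  apply: (B2_colors_not_uniq AD DC AZ ZC DZ); rewrite cD /=.
  case: (eqVneq (c Z) (c A)) => [?|ZA]; first by case: special_Z; left.
  case: (eqVneq (c Z) (c C)) => [?|ZC']; first by case: special_Z; right.
  colors_distinct.
move=> Z AZ ZC; case: (boolP (incomparable B Z)) => [BZ|cmp_BZ].
  exact: spread AB BC AZ ZC BZ erefl.
have [W [AW WC WZ WB]] : exists W, [/\ A \proper W, W \proper C, incomparable W Z
    & incomparable W B].
  move: cmp_BZ; rewrite negb_and !negbK => /orP[BZ|ZB].
    by have [W [? ? ? ?]] := interval_incomparable_pair AB BZ ZC; exists W.
  exact: interval_incomparable_pair AZ ZB BC.
apply: (spread W) => //; apply: (spread B) => //; by rewrite incomparable_sym.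
Qed.

Lemma colors_comparable X Y :
  uniq [:: c set0; c X; c Y; c setT] -> X \subset Y \/ Y \subset X.
Proof.
move=> cols; case: (boolP (X \subset Y)) => [|XY]; first by left.
case: (boolP (Y \subset X)) => [|YX]; first by right.
by case: (incomparable_colors_not_uniq (X := X) (Y := Y)); rewrite /incomparable ?XY.
Qed.

Lemma chain_outside A B C :
  tricolored A B C -> forall S, c S != c set0 -> c S != c setT -> c S != c B ->
  S \subset A \/ C \subset S.
Proof.
move=> ch S S0 ST SB; have [AB BC cols] := ch.
have AC := proper_sub (proper_trans AB BC).
have CA2 : 1 < #|C :\: A| by rewrite cardsDS //; have := proper_chain_card AB BC; lia.
case: (boolP (S \subset A)) => [|SA]; first by left.
case: (boolP (C \subset S)) => [|CS]; first by right.
exfalso; case: (boolP ((A \subset S) && (S \subset C))) => [/andP[AS SC]|out].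
  by move: SB; rewrite (interval_color ch) ?eqxx // properE ?AS ?SC.
have [W [AW WC WS]] := interval_incomparable AC CA2 SA CS out.
apply: (incomparable_colors_not_uniq WS).
by rewrite (interval_color ch AW WC); colors_distinct.
Qed.

Lemma tricolored_chain :
  5 <= k -> exact_coloring c -> c set0 != c setT ->
  exists A B C, tricolored A B C.
Proof.
move=> k5 onto c0T.
have new_color (s : seq 'I_k) : size s < 5 -> exists g, g \notin s.
  by move=> small; apply: exists_notin; rewrite card_ord; exact: leq_trans small k5.
have [g1 g1_new] := new_color [:: c set0; c setT] isT.
have [g2 g2_new] := new_color [:: g1; c set0; c setT] isT.
have [g3 g3_new] := new_color [:: g2; g1; c set0; c setT] isT.
have [S1 cS1] := onto g1; have [S2 cS2] := onto g2; have [S3 cS3] := onto g3.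
have {g1_new g2_new g3_new} : uniq [:: c set0; c setT; c S1; c S2; c S3].
  by rewrite cS1 cS2 cS3; colors_distinct.
move: S1 S2 S3 {cS1 cS2 cS3} => S1 S2 S3 cols.
wlog S12 : S1 S2 cols / S1 \subset S2.
  move=> chain_of_sub.
  have [S12|S21] : S1 \subset S2 \/ S2 \subset S1 by apply: colors_comparable; colors_distinct.
    exact: chain_of_sub S12.
  by apply: (chain_of_sub S2 S1) => //; colors_distinct.
have chain X Y Z : X \subset Y -> Y \subset Z -> uniq [:: c set0; c setT; c X; c Y; c Z] ->
    exists A B C, tricolored A B C.
  by move=> XY YZ cXYZ; exists X, Y, Z; split; rewrite // colored_proper //; colors_distinct.
have [S23|S32] : S2 \subset S3 \/ S3 \subset S2 by apply: colors_comparable; colors_distinct.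
  exact: chain S12 S23 cols.
have [S13|S31] : S1 \subset S3 \/ S3 \subset S1 by apply: colors_comparable; colors_distinct.
  by apply: chain S13 S32 _; colors_distinct.
by apply: chain S31 S12 _; colors_distinct.
Qed.

Section Chain.
Variables A B C : {set 'I_n}.
Hypothesis ch : tricolored A B C.

Let chain_proper : A \proper C.
Proof. by case: ch => AB BC _; exact: proper_trans AB BC. Qed.

Let chain_subset : A \subset C := proper_sub chain_proper.

Let chain_gap : 1 < #|C :\: A|.
Proof.
by case: ch => AB BC _; rewrite cardsDS ?chain_subset //; have := proper_chain_card AB BC; lia.
Qed.

Let exists_gap_elem : exists2 x, x \in C & x \notin A.
Proof.
by have /card_gt0P[x] := ltnW chain_gap; rewrite inE => /andP[xA xC]; exists x.
Qed.

Lemma chain_no_special_below S : c S != c set0 -> c S != c setT -> ~~ (S \proper A).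
Proof.
move=> S0 ST; apply/negP => SA; have [AB BC cols] := ch.
case: (eqVneq (c S) (c B)) => [SB|SB].
  have chS : tricolored S A C by split=> //; rewrite SB; colors_distinct.
  by move/eqP: (interval_color chS (proper_trans SA AB) BC); apply/negP; colors_distinct.
case: (eqVneq (c S) (c A)) => [SA'|SA'].
  have chS : tricolored S B C by split=> //; [exact: proper_trans SA AB | rewrite SA'; colors_distinct].
  by move/eqP: (interval_color chS SA chain_proper); apply/negP; colors_distinct.
have [W [AW WC /andP[_ BW] _]] := interval_incomparable_pair AB (subxx B) BC.
have cW := interval_color ch AW WC.
have chS : tricolored S A B by split=> //; colors_distinct.
have [WS|] : W \subset S \/ B \subset W.
  by apply: chain_outside chS _ _ _ _; rewrite cW; colors_distinct.
  by have := proper_trans (proper_sub_trans AW WS) SA; rewrite properxx.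
exact/negP.
Qed.

Lemma chain_no_special_above S : c S != c set0 -> c S != c setT -> ~~ (C \proper S).
Proof.
move=> S0 ST; apply/negP => CS; have [AB BC cols] := ch.
case: (eqVneq (c S) (c C)) => [SC|SC].
  have chS : tricolored A B S by split=> //; [exact: proper_trans BC CS | rewrite SC; colors_distinct].
  by move/eqP: (interval_color chS chain_proper CS); apply/negP; colors_distinct.
case: (eqVneq (c S) (c B)) => [SB|SB].
  have chS : tricolored A C S by split=> //; rewrite SB; colors_distinct.
  by move/eqP: (interval_color chS AB (proper_trans BC CS)); apply/negP; colors_distinct.
have [W [AW WC /andP[WB _] _]] := interval_incomparable_pair AB (subxx B) BC.
have cW := interval_color ch AW WC.
have chS : tricolored B C S by split=> //; colors_distinct.
have [|SW] : W \subset B \/ S \subset W.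
  by apply: chain_outside chS _ _ _ _; rewrite cW; colors_distinct.
  exact/negP.
by have := proper_trans (proper_sub_trans CS SW) WC; rewrite properxx.
Qed.

Lemma chain_special_between S :
  c S != c set0 -> c S != c setT -> (A \subset S) && (S \subset C).
Proof.
move=> S0 ST; have [_ _ cols] := ch.
have AS : S \subset A \/ A \subset S -> A \subset S.
  by case=> // SA; move: (chain_no_special_below S0 ST); rewrite properE SA negbK.
have SC : S \subset C \/ C \subset S -> S \subset C.
  by case=> // CS; move: (chain_no_special_above S0 ST); rewrite properE CS negbK.
case: (eqVneq (c S) (c B)) => [SB|SB].
  have cmpA : S \subset A \/ A \subset S by apply: colors_comparable; rewrite SB; colors_distinct.
  have cmpC : S \subset C \/ C \subset S by apply: colors_comparable; rewrite SB; colors_distinct.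
  by rewrite (AS cmpA) (SC cmpC).
case: (chain_outside ch S0 ST SB) => [SA|CS].
  by rewrite (AS (or_introl SA)) (subset_trans SA chain_subset).
by rewrite (SC (or_intror CS)) (subset_trans chain_subset CS).
Qed.

Lemma chain_nonspecial Z :
  ~~ ((A \subset Z) && (Z \subset C)) -> c Z = c set0 \/ c Z = c setT.
Proof.
move=> out; case: (eqVneq (c Z) (c set0)) => [|Z0]; first by left.
case: (eqVneq (c Z) (c setT)) => [|ZT]; first by right.
by rewrite chain_special_between in out.
Qed.

Lemma chain_colors Z : c Z \in [:: c set0; c setT; c A; c B; c C].
Proof.
case: (boolP ((A \subset Z) && (Z \subset C))) => [/andP[AZ ZC]|out].
  case: (eqVneq Z A) => [->|ZA]; first by rewrite !inE eqxx !orbT.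
  case: (eqVneq Z C) => [->|ZC']; first by rewrite !inE eqxx !orbT.
  by rewrite (interval_color ch) ?inE ?eqxx ?orbT // properEneq ?AZ ?ZC ?ZC' // eq_sym ZA.
by case: (chain_nonspecial out) => ->; rewrite !inE eqxx ?orbT.
Qed.

Lemma chain_lower_incomparable Z :
  Z \subset C -> ~~ (A \subset Z) -> ~~ (Z \subset A) -> c Z = c set0.
Proof.
move=> ZC AZ ZA; have [_ _ cols] := ch.
have [//|ZT] : c Z = c set0 \/ c Z = c setT by apply: chain_nonspecial; rewrite (negbTE AZ).
have CZ : ~~ (C \subset Z) by apply: contra AZ; apply: subset_trans chain_subset.
have [W [AW WC WZ]] := interval_incomparable chain_subset chain_gap ZA CZ
  ltac:(by rewrite (negbTE AZ)).
have W0 : set0 \proper W := sub_proper_trans (sub0set A) AW.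
have Z0 : set0 \proper Z.
  by rewrite properE sub0set; apply: contra ZA => Z0; exact: subset_trans Z0 (sub0set A).
have ZC' : Z \proper C by rewrite properE ZC.
case: (B2_colors_not_uniq W0 WC Z0 ZC' WZ).
by rewrite (interval_color ch AW WC) ZT; colors_distinct.
Qed.

Lemma chain_lower Z : Z \subset C -> ~~ (A \subset Z) -> c Z = c set0.
Proof.
move=> ZC AZ; case: (boolP (Z \subset A)) => [ZA|]; last exact: chain_lower_incomparable.
have [_ _ cols] := ch.
have [//|ZT] : c Z = c set0 \/ c Z = c setT by apply: chain_nonspecial; rewrite (negbTE AZ).
have [x xC xA] := exists_gap_elem.
have xZ : x \notin Z by apply: contra xA; apply: (subsetP ZA).
have Z'C : x |: Z \subset C by rewrite subUset sub1set xC.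
have AZ' : ~~ (A \subset x |: Z).
  have [a aA aZ] := subsetPn AZ; apply/subsetPn; exists a => //.
  by rewrite in_setU1 negb_or aZ andbT; apply: contraNneq xA => <-.
have Z'A : ~~ (x |: Z \subset A) by apply/subsetPn; exists x; rewrite ?setU11.
have cZ' := chain_lower_incomparable Z'C AZ' Z'A.
have ZA' : Z \proper A by rewrite properE ZA.
have ZZ' : Z \proper x |: Z by apply: properUr; rewrite sub1set.
have Z'C' : x |: Z \proper C.
  by rewrite properE Z'C; apply: contra AZ'; apply: subset_trans chain_subset.
have inc : incomparable A (x |: Z) by apply/andP.
case: (B2_colors_not_uniq ZA' chain_proper ZZ' Z'C' inc).
by rewrite cZ' ZT; colors_distinct.
Qed.

Lemma chain_upper_incomparable Z :
  A \subset Z -> ~~ (Z \subset C) -> ~~ (C \subset Z) -> c Z = c setT.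
Proof.
move=> AZ ZC CZ; have [_ _ cols] := ch.
have [Z0|//] : c Z = c set0 \/ c Z = c setT by apply: chain_nonspecial; rewrite (negbTE ZC) andbF.
have ZA : ~~ (Z \subset A) by apply: contra ZC => ZA; exact: subset_trans ZA chain_subset.
have [W [AW WC WZ]] := interval_incomparable chain_subset chain_gap ZA CZ
  ltac:(by rewrite (negbTE ZC) andbF).
have WT : W \proper setT := proper_sub_trans WC (subsetT C).
have AZ' : A \proper Z by rewrite properE AZ.
have ZT : Z \proper setT by rewrite properT; apply: contraNneq CZ => ->; exact: subsetT.
case: (B2_colors_not_uniq AW WT AZ' ZT WZ).
by rewrite (interval_color ch AW WC) Z0; colors_distinct.
Qed.

Lemma chain_upper Z : A \subset Z -> ~~ (Z \subset C) -> c Z = c setT.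
Proof.
move=> AZ ZC; case: (boolP (C \subset Z)) => [CZ|]; last exact: chain_upper_incomparable.
have [_ _ cols] := ch.
have [Z0|//] : c Z = c set0 \/ c Z = c setT by apply: chain_nonspecial; rewrite (negbTE ZC) andbF.
have [x xC xA] := exists_gap_elem.
have AZ' : A \subset Z :\ x.
  by apply/subsetP => y yA; rewrite in_setD1 (subsetP AZ) // andbT; apply: contraNneq xA => <-.
have Z'C : ~~ (Z :\ x \subset C).
  have [u uZ uC] := subsetPn ZC; apply/subsetPn; exists u => //.
  by rewrite in_setD1 uZ andbT; apply: contraNneq uC => ->.
have CZ' : ~~ (C \subset Z :\ x) by apply/subsetPn; exists x; rewrite ?setD11.
have cZ' := chain_upper_incomparable AZ' Z'C CZ'.
have CZ'' : C \proper Z by rewrite properE CZ.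
have AZ'' : A \proper Z :\ x.
  by rewrite properE AZ'; apply: contra Z'C => Z'A; exact: subset_trans Z'A chain_subset.
have Z'Z : Z :\ x \proper Z by apply: properD1; apply: (subsetP CZ).
have inc : incomparable C (Z :\ x) by apply/andP.
case: (B2_colors_not_uniq chain_proper CZ'' AZ'' Z'Z inc).
by rewrite cZ' Z0; colors_distinct.
Qed.

End Chain.

End NoRainbow.

Theorem lemma2p5 (k n : nat) (c : {set 'I_n} -> 'I_k) :
  5 <= k -> 4 <= n -> exact_coloring c ->
  c set0 != c [set: 'I_n] ->
  (~ rainbow_B2 c <-> (k = 5 /\ type1 c)).
Proof.
move=> k5 _ onto c0T; split; last by case=> _; exact: type1_no_rainbow.
move=> no_rainbow; have [A [B [C ch]]] := tricolored_chain no_rainbow k5 onto c0T.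
have [AB BC cols] := ch.
split.
  apply/eqP; rewrite eqn_leq k5 andbT.
  exact: exact_coloring_size onto (chain_colors no_rainbow ch).
exists A, C; split.
  split; last exact: proper_chain_card AB BC.
  - by apply: (colored_proper (c := c) (sub0set A)); colors_distinct.
  - exact: proper_trans AB BC.
  - by apply: (colored_proper (c := c) (subsetT C)); colors_distinct.
exists (c set0), (c A), (c B), (c C), (c setT); split; first by colors_distinct.
split; first exact: (chain_lower no_rainbow ch).
split=> //; first exact: (interval_color no_rainbow ch).
  exact: (chain_upper no_rainbow ch).
by move=> Z ZC AZ; apply: (chain_nonspecial no_rainbow ch); rewrite (negbTE ZC) andbF.
Qed.
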